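(* Consider the following model. States $\omega_t\in\{0,1\}$, $t\in\{1,2\}$, with $\Pr[\omega_1=1]=\mu_0\in(0,1)$ and $\Pr[\omega_2=\omega\mid\omega_1=\omega]=\rho\in(1/2,1)$. In each period an agent A chooses $e_t\in\{0,1\}$; if $e_t=1$ he observes $\omega_t$, if $e_t=0$ he observes $\omega_t$ with probability $\pi\in(0,1)$ and nothing otherwise; he reports $r_t\in\{\varnothing,\omega_t\}$ if he observed $\omega_t$, else $r_t=\varnothing$. A's payoff is $x-c(e_1+e_2)$, $c>0$, with $x=\hat x(r_1,r_2)$. A mechanism consists of $\sigma_1\in\{0,1\}$, $\sigma_2:\{\varnothing,0,1\}\to\{0,1\}$, $\hat x:\{\varnothing,0,1\}^2\to\{0,1\}$; A best-responds, following the recommendation and disclosing when indifferent. A mechanism is IC if at every history occurring with positive probability A optimally obeys the testing recommendation and discloses every observed result, and $\hat x(r_1,\varnothing)=0$ whenever $\sigma_2(r_1)=1$. Let $\gamma=c/(1-\pi)$, and for $r_1\in\{1,0,\varnothing\}$ let $\mu_2=\rho,\ 1-\rho,\ \rho\mu_0+(1-\rho)(1-\mu_0)$ respectively, and $\mathbb{E}_{\mu_2}[\hat x(r_1,\tilde r_2)]=\mu_2\hat x(r_1,1)+(1-\mu_2)\hat x(r_1,0)$. In any IC mechanism, if $\sigma_2(r_1)=0$ for some $r_1$ occurring with positive probability, then $$\gamma\ \ge\ \mathbb{E}_{\mu_2}[\hat x(r_1,\tilde r_2)]-\hat x(r_1,\varnothing)\ \ge\ 0.$$ *)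

From mathcomp Require Import all_boot all_order all_algebra.
Set Implicit Arguments. Unset Strict Implicit. Unset Printing Implicit Defensive.
Import Order.TTheory GRing.Theory Num.Theory.
Local Open Scope ring_scope.

(* A report r_t in {empty, 0, 1}: None = empty report, Some w = reported w. *)
Definition report := option bool.

Record mechanism := Mech {
  sigma1 : bool;
  sigma2 : report -> bool;
  xhat : report -> report -> bool }.

Section Model.
Variables (R : realFieldType) (mu0 rho pi c : R).

Definition b2R (b : bool) : R := (b : nat)%:R.

(* belief Pr[omega_2 = 1] after first-period information/report r1 *)
Definition mu2 (r1 : report) : R :=
  match r1 with
  | Some true => rho
  | Some false => 1 - rho
  | None => rho * mu0 + (1 - rho) * (1 - mu0)
  end.

(* probability of observing omega_t given effort e_t *)
Definition pobs (e : bool) : R := if e then 1 else pi.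

(* reporting rule d : observed state -> disclose? *)
Definition rep (d : bool -> bool) (w : bool) : report := if d w then Some w else None.

Definition truthful : bool -> bool := fun _ => true.

(* expected period-2 payoff (x minus period-2 testing cost) after r1,
   with belief mu about omega_2, effort e and reporting rule d *)
Definition pay2 (M : mechanism) (r1 : report) (mu : R) (e : bool) (d : bool -> bool) : R :=
  pobs e * (mu * b2R (xhat M r1 (rep d true)) + (1 - mu) * b2R (xhat M r1 (rep d false)))
  + (1 - pobs e) * b2R (xhat M r1 None) - c * b2R e.

(* first-period report generated by info I (None = not observed) and rule d1 *)
Definition rep1 (d1 : bool -> bool) (I : option bool) : report :=
  match I with Some w => rep d1 w | None => None end.

(* ex-ante total expected payoff of a full agent plan: first-period effort e1,
   first-period reporting rule d1, and second-period plan s depending on the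
   agent's first-period information I (effort, reporting rule). *)
Definition V1 (M : mechanism) (e1 : bool) (d1 : bool -> bool)
    (s : option bool -> bool * (bool -> bool)) : R :=
  let cont I := pay2 M (rep1 d1 I) (mu2 I) (s I).1 (s I).2 in
  mu0 * (pobs e1 * cont (Some true) + (1 - pobs e1) * cont None)
  + (1 - mu0) * (pobs e1 * cont (Some false) + (1 - pobs e1) * cont None)
  - c * b2R e1.

Definition obey2 (M : mechanism) (I : option bool) : bool * (bool -> bool) :=
  (sigma2 M (rep1 truthful I), truthful).

Definition prob_r1 (M : mechanism) (r1 : report) : R :=
  match r1 with
  | Some w => pobs (sigma1 M) * (if w then mu0 else 1 - mu0)
  | None => 1 - pobs (sigma1 M)
  end.

Definition IC (M : mechanism) : Prop :=
  (* at the initial history: obeying sigma1, disclosing, and then obeying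
     sigma2 and disclosing is optimal among all plans *)
  (forall e1 d1 s, V1 M e1 d1 s <= V1 M (sigma1 M) truthful (obey2 M))
  (* at every positive-probability second-period history r1: obeying sigma2(r1)
     and disclosing is optimal *)
  /\ (forall r1, 0 < prob_r1 M r1 -> forall e d,
        pay2 M r1 (mu2 r1) e d <= pay2 M r1 (mu2 r1) (sigma2 M r1) truthful)
  (* after observing omega_2 = w (positive probability), disclosing is optimal *)
  /\ (forall r1, 0 < prob_r1 M r1 -> forall w : bool,
        0 < pobs (sigma2 M r1) * (if w then mu2 r1 else 1 - mu2 r1) ->
        b2R (xhat M r1 None) <= b2R (xhat M r1 (Some w)))
  /\ (forall r1, sigma2 M r1 -> xhat M r1 None = false).

Definition gamma : R := c / (1 - pi).

Definition Ex2 (M : mechanism) (r1 : report) : R :=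
  mu2 r1 * b2R (xhat M r1 (Some true)) + (1 - mu2 r1) * b2R (xhat M r1 (Some false)).

End Model.

From mathcomp Require Import all_boot all_order all_algebra.
From mathcomp Require Import ring lra.
Import Order.TTheory GRing.Theory Num.Theory.
Local Open Scope ring_scope.

(* At a history r1 where no second test is recommended, the agent obtains
   pi E + (1 - pi) x0, with E = Ex2 r1 and x0 = xhat(r1, empty).  Testing anyway
   and disclosing yields E - c, so obedience gives (1 - pi)(E - x0) <= c.
   Not testing and concealing any observation yields x0, so obedience gives
   pi (E - x0) >= 0. *)

Section SecondPeriodObedience.
Variables (R : realFieldType) (mu0 rho pi c : R) (M : mechanism).

Lemma b2R_false : b2R R false = 0. Proof. by []. Qed.

Lemma b2R_true : b2R R true = 1. Proof. by []. Qed.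

Lemma pay2_truthful r1 e :
  pay2 pi c M r1 (mu2 mu0 rho r1) e truthful =
  pobs pi e * Ex2 mu0 rho M r1 + (1 - pobs pi e) * b2R R (xhat M r1 None)
  - c * b2R R e.
Proof. by []. Qed.

Lemma pay2_conceal r1 mu e :
  pay2 pi c M r1 mu e (fun _ => false) = b2R R (xhat M r1 None) - c * b2R R e.
Proof. by rewrite /pay2 /rep /=; congr (_ - _); ring. Qed.

Variable r1 : report.
Hypothesis no_test : sigma2 M r1 = false.
Hypothesis obey : forall e d,
  pay2 pi c M r1 (mu2 mu0 rho r1) e d <= pay2 pi c M r1 (mu2 mu0 rho r1) (sigma2 M r1) truthful.

Lemma obey_gain_le_gamma :
  pi < 1 -> Ex2 mu0 rho M r1 - b2R R (xhat M r1 None) <= gamma pi c.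
Proof.
move=> pi_lt1; have := obey true truthful.
rewrite no_test !pay2_truthful /pobs b2R_true b2R_false => test_dev.
by rewrite /gamma ler_pdivlMr; lra.
Qed.

Lemma obey_gain_ge0 :
  0 < pi -> 0 <= Ex2 mu0 rho M r1 - b2R R (xhat M r1 None).
Proof.
move=> pi_gt0; have := obey false (fun _ => false).
rewrite no_test pay2_conceal pay2_truthful /pobs b2R_false => conceal_dev.
by rewrite -(pmulr_rge0 _ pi_gt0); lra.
Qed.

End SecondPeriodObedience.

Theorem lemma5 (R : realFieldType) (mu0 rho pi c : R)
  (hmu0 : 0 < mu0 < 1) (hrho : 2^-1 < rho < 1) (hpi : 0 < pi < 1) (hc : 0 < c)
  (M : mechanism) :
  IC mu0 rho pi c M ->
  forall r1 : report, 0 < prob_r1 mu0 pi M r1 -> sigma2 M r1 = false ->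
  Ex2 mu0 rho M r1 - b2R R (xhat M r1 None) <= gamma pi c
  /\ 0 <= Ex2 mu0 rho M r1 - b2R R (xhat M r1 None).
Proof.
move=> [_ [obey2_opt _]] r1 r1_pos no_test.
have obey := obey2_opt r1 r1_pos.
case/andP: hpi => pi_gt0 pi_lt1.
split; [exact: obey_gain_le_gamma | exact: obey_gain_ge0].
Qed.
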